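(* Let $k\ge 3$ be odd and let $G$ be a $k$-uniform hypercycle of size $r\ge 2$, with Laplacian tensor $\mathcal L$. Then $\lambda(\mathcal L)=2$.
   Context: A $k$-uniform hypercycle of size $d$ has vertex set $\{i_{j,s}: j\in[d], s\in[k-1]\}$ (all distinct) and edge set $\{\{i_{j,1},\ldots,i_{j,k-1},i_{j+1,1}\}: j\in[d]\}$ where $i_{d+1,1}:=i_{1,1}$. For a $k$-uniform hypergraph $G=(V,E)$ with $V=[n]$ and $d_i$ the number of edges containing $i$, the Laplacian tensor $\mathcal L=\mathcal D-\mathcal A$ ($\mathcal D$ diagonal with entries $d_i$, $\mathcal A$ with entries $\frac1{(k-1)!}$ at index tuples forming an edge and $0$ otherwise) satisfies $(\mathcal L\mathbf x^{k-1})_i=d_ix_i^{k-1}-\sum_{e\in E,\,i\in e}\prod_{s\in e\setminus\{i\}}x_s$. A real $\lambda$ is an H-eigenvalue of $\mathcal L$ if some nonzero $\mathbf x\in\mathbb R^n$ satisfies $(\mathcal L\mathbf x^{k-1})_i=\lambda x_i^{k-1}$ for all $i$; $\lambda(\mathcal L)$ is the largest H-eigenvalue. *)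

From HB Require Import structures.
From mathcomp Require Import all_boot all_order all_algebra.
From mathcomp Require Import reals.
Set Implicit Arguments. Unset Strict Implicit. Unset Printing Implicit Defensive.
Import Order.TTheory GRing.Theory Num.Theory.
Local Open Scope ring_scope.

Definition hdeg (V : finType) (E : {set {set V}}) (i : V) : nat :=
  #|[set e in E | i \in e]|.

(* (L x^{k-1})_i = d_i x_i^{k-1} - sum_{e in E, i in e} prod_{s in e \ i} x_s *)
Definition lap_apply (R : realType) (k : nat) (V : finType)
  (E : {set {set V}}) (x : V -> R) (i : V) : R :=
  (hdeg E i)%:R * x i ^+ k.-1
  - \sum_(e in E | i \in e) \prod_(s in e :\ i) x s.

Definition is_H_eigenvalue (R : realType) (k : nat) (V : finType)
  (E : {set {set V}}) (lambda : R) : Prop :=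
  exists x : V -> R, (exists i, x i != 0) /\
    forall i, lap_apply k E x i = lambda * x i ^+ k.-1.

Definition is_largest_H_eigenvalue (R : realType) (k : nat) (V : finType)
  (E : {set {set V}}) (lambda : R) : Prop :=
  is_H_eigenvalue k E lambda /\
  forall mu : R, is_H_eigenvalue k E mu -> mu <= lambda.

(* The k-uniform hypercycle of size r: vertices i_{j,s} = (j, s) with
   j : 'I_r, s : 'I_(k-1); edge j = {i_{j,1},...,i_{j,k-1}, i_{j+1,1}}
   (indices shifted to start at 0, j+1 taken cyclically). *)
Definition hypercycle_edge (r k : nat) (j : 'I_r) : {set 'I_r * 'I_k.-1} :=
  [set v : 'I_r * 'I_k.-1 |
     (v.1 == j) || ((v.1 == ordS j) && (nat_of_ord v.2 == 0%N))].

Definition hypercycle (r k : nat) : {set {set 'I_r * 'I_k.-1}} :=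
  [set hypercycle_edge k j | j : 'I_r].

From mathcomp Require Import all_boot all_order all_algebra.
From mathcomp Require Import reals.
From mathcomp Require Import ring lra zify.
Set Implicit Arguments. Unset Strict Implicit. Unset Printing Implicit Defensive.
Import Order.TTheory GRing.Theory Num.Theory.
Local Open Scope ring_scope.

(* Call (j, 0) the head of edge j: it lies in edges j - 1 and j, while the other
   k - 2 vertices of edge j lie in edge j only.  Every edge has k >= 3 vertices, so
   the indicator of a head is an eigenvector for its degree 2.  Conversely, let x
   be an eigenvector for mu > 2, write y_j for its value at the head of edge j and
   Q_j for its product over edge j.  The eigenequations read
   (2 - mu) y_j^k = Q_j + Q_(j-1) at heads and (1 - mu) x_v^k = Q_j at the other
   vertices of edge j.  As k is odd, these other values are all equal to some t,
   and Q_j <> 0 gives (1 - mu) t^2 = y_j y_(j+1) < 0.  Multiplying the head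
   equations by sg y_j and summing, (2 - mu) sum_j |y_j|^k =
   sum_j Q_j (sg y_j + sg y_(j+1)) = 0; hence all heads, then all Q_j, and finally
   all values of x vanish. *)

Lemma ordS_neq n (i : 'I_n) : (1 < n)%N -> ordS i != i.
Proof.
move=> n_gt1; apply/eqP => /(congr1 val) /=.
have := ltn_ord i; case: (ltngtP i.+1 n) => [lt_in|//|eq_n] _.
- by rewrite modn_small //; lia.
- by rewrite eq_n modnn; lia.
Qed.

Lemma ord_pred_neq n (i : 'I_n) : (1 < n)%N -> ord_pred i != i.
Proof.
move=> n_gt1; apply/eqP => eq_i; have := ordS_neq i n_gt1.
by rewrite -{1}eq_i ord_predK eqxx.
Qed.

Lemma big_pred2 (R : Type) (idx : R) (op : Monoid.com_law idx) (I : finType)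
    (a b : I) (F : I -> R) :
  a != b -> \big[op/idx]_(j | (j == a) || (j == b)) F j = op (F a) (F b).
Proof.
move=> neq_ab; rewrite (bigD1 a) ?eqxx //=; congr (op _ _).
rewrite (eq_bigl (pred1 b)) ?big_pred1_eq // => j /=.
by case: (eqVneq j a) => [->|]; rewrite ?(negbTE neq_ab) ?andbT.
Qed.

Lemma sgr_exprn_odd (R : realDomainType) n (y : R) :
  odd n -> Num.sg (y ^+ n) = Num.sg y.
Proof.
move=> odd_n; rewrite sgrX; have [->|y_neq0] := eqVneq y 0.
  by rewrite sgr0 expr0n; case: n odd_n.
by rewrite sgr_odd // odd_n expr1.
Qed.

Lemma exprn_odd_inj (R : realDomainType) n : odd n -> injective (fun y : R => y ^+ n).
Proof.
move=> odd_n a b /= eq_ab; have n_gt0 : (0 < n)%N by case: n odd_n eq_ab.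
have eq_sg : Num.sg a = Num.sg b.
  by rewrite -(sgr_exprn_odd a odd_n) -(sgr_exprn_odd b odd_n) eq_ab.
have eq_norm : `|a| = `|b|.
  by apply/eqP; rewrite -(eqrXn2 n_gt0) // -!normrX eq_ab.
by rewrite (numEsg a) (numEsg b) eq_sg eq_norm.
Qed.

Lemma sgrD_eq0 (R : realDomainType) (a b : R) : a * b < 0 -> Num.sg a + Num.sg b = 0.
Proof.
rewrite -sgr_lt0 sgrM.
by case: (ltrgt0P a) => ha; case: (ltrgt0P b) => hb;
  rewrite ?(gtr0_sg ha) ?(ltr0_sg ha) ?(gtr0_sg hb) ?(ltr0_sg hb) ?ha ?hb ?sgr0; lra.
Qed.

Section Laplacian.
Variables (R : realType) (k : nat) (V : finType) (E : {set {set V}}).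

Lemma mulr_lap_apply (x : V -> R) i : (0 < k)%N ->
  x i * lap_apply k E x i =
  (hdeg E i)%:R * x i ^+ k - \sum_(e in E | i \in e) \prod_(s in e) x s.
Proof.
move=> k_gt0; rewrite /lap_apply mulrBr mulr_sumr; congr (_ - _).
  by rewrite mulrCA -exprS prednK.
by apply: eq_bigr => e /andP[_ ie]; rewrite (big_setD1 i ie).
Qed.

Lemma indicator_H_eigenvalue (v : V) :
  (1 < k)%N -> (forall e, e \in E -> 2 < #|e|)%N ->
  is_H_eigenvalue k E ((hdeg E v)%:R : R).
Proof.
move=> k_gt1 E_big; exists (fun i => (i == v)%:R); split.
  by exists v; rewrite eqxx oner_neq0.
move=> i; rewrite /lap_apply big1 ?subr0 => [|e /andP[Ee _]].
  have [->|neq_iv] := eqVneq i v; first by rewrite expr1n mulr1.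
  have -> : k.-1 = k.-2.+1 by lia.
  by rewrite expr0n !mulr0.
have : (0 < #|(e :\ i) :\ v|)%N.
  move: (E_big e Ee); rewrite (cardsD1 i) (cardsD1 v (e :\ i)).
  by case: (i \in e); case: (v \in e :\ i); lia.
case/card_gt0P => u; rewrite in_setD1 => /andP[neq_uv ue].
by apply/eqP/prodf_eq0; exists u => //; rewrite (negbTE neq_uv).
Qed.

End Laplacian.

Section HypercycleEdges.
Variables (r m : nat).
Hypothesis r_gt1 : (1 < r)%N.

Local Notation vertex := ('I_r * 'I_m.+2)%type.
Local Notation edge := (@hypercycle_edge r m.+3).
Local Notation E := (hypercycle r m.+3).

Lemma mem_hypercycle_edge (j : 'I_r) (v : vertex) :
  (v \in edge j) = (v.1 == j) || (v.1 == ordS j) && (v.2 == ord0).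
Proof. by rewrite inE -val_eqE. Qed.

Lemma hypercycle_edgeE (j : 'I_r) :
  edge j = (ordS j, ord0) |: [set (j, s) | s : 'I_m.+2].
Proof.
apply/setP => -[a s]; rewrite mem_hypercycle_edge !inE /= orbC.
congr orb; apply/eqP/imsetP => [->|[t _ [-> _]] //]; by exists s.
Qed.

Lemma card_hypercycle_edge (j : 'I_r) : #|edge j| = m.+3.
Proof.
rewrite hypercycle_edgeE cardsU1 card_imset ?card_ord; last by move=> s t [].
suff -> : (ordS j, ord0) \notin [set (j, s) | s : 'I_m.+2] by [].
by apply/imsetP => -[s _ [eq_j _]]; move: (ordS_neq j r_gt1); rewrite eq_j eqxx.
Qed.

Lemma prod_hypercycle_edge (R : comNzRingType) (x : vertex -> R) (j : 'I_r) :
  \prod_(v in edge j) x v = x (ordS j, ord0) * \prod_(s : 'I_m.+2) x (j, s).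
Proof.
rewrite hypercycle_edgeE big_setU1 /=; last first.
  by apply/imsetP => -[s _ [eq_j _]]; move: (ordS_neq j r_gt1); rewrite eq_j eqxx.
by rewrite big_imset //= => s t _ _ [].
Qed.

Lemma hypercycle_edge_inj : injective edge.
Proof.
move=> j j' eq_jj'.
have : (j, ord_max) \in edge j by rewrite mem_hypercycle_edge eqxx.
by rewrite eq_jj' mem_hypercycle_edge /= => /orP[/eqP|/andP[_ /eqP]].
Qed.

Lemma big_hypercycle (T : Type) (idx : T) (op : Monoid.com_law idx)
    (v : vertex) (F : {set vertex} -> T) :
  \big[op/idx]_(e in E | v \in e) F e =
  \big[op/idx]_(j | v \in edge j) F (edge j).
Proof. by rewrite big_imset_cond //; move=> a b _ _; apply: hypercycle_edge_inj. Qed.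

Lemma mem_hypercycle_edge_head (j j' : 'I_r) :
  ((j, ord0) \in edge j') = (j' == j) || (j' == ord_pred j).
Proof.
rewrite mem_hypercycle_edge /= eqxx andbT eq_sym; congr orb.
by rewrite eq_sym (can2_eq (@ordSK r) (@ord_predK r)).
Qed.

Lemma mem_hypercycle_edge_interior (j j' : 'I_r) (s : 'I_m.+2) :
  s != ord0 -> ((j, s) \in edge j') = (j' == j).
Proof.
by move=> s_neq0; rewrite mem_hypercycle_edge /= (negbTE s_neq0) andbF orbF eq_sym.
Qed.

Lemma big_hypercycle_head (T : Type) (idx : T) (op : Monoid.com_law idx)
    (j : 'I_r) (F : {set vertex} -> T) :
  \big[op/idx]_(e in E | (j, ord0) \in e) F e = op (F (edge j)) (F (edge (ord_pred j))).
Proof.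
rewrite big_hypercycle; under eq_bigl do rewrite mem_hypercycle_edge_head.
by rewrite big_pred2 // eq_sym ord_pred_neq.
Qed.

Lemma big_hypercycle_interior (T : Type) (idx : T) (op : Monoid.com_law idx)
    (j : 'I_r) (s : 'I_m.+2) (F : {set vertex} -> T) :
  s != ord0 -> \big[op/idx]_(e in E | (j, s) \in e) F e = F (edge j).
Proof.
move=> s_neq0; rewrite big_hypercycle.
by under eq_bigl do rewrite mem_hypercycle_edge_interior //; rewrite big_pred1_eq.
Qed.

Lemma hdeg_hypercycle (v : vertex) : hdeg E v = (\sum_(e in E | v \in e) 1)%N.
Proof. by rewrite /hdeg -sum1_card; apply: eq_bigl => e; rewrite inE. Qed.

Lemma hdeg_hypercycle_head (j : 'I_r) : hdeg E (j, ord0) = 2%N.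
Proof. by rewrite hdeg_hypercycle big_hypercycle_head. Qed.

Lemma hdeg_hypercycle_interior (j : 'I_r) (s : 'I_m.+2) :
  s != ord0 -> hdeg E (j, s) = 1%N.
Proof. by move=> s_neq0; rewrite hdeg_hypercycle big_hypercycle_interior. Qed.

End HypercycleEdges.

Section HypercycleEigenvector.
Variables (R : realType) (r m : nat) (mu : R) (x : 'I_r * 'I_m.+2 -> R).
Hypotheses (r_gt1 : (1 < r)%N) (odd_k : odd m.+3) (mu_gt2 : 2 < mu).
Hypothesis eigen_x : forall v, lap_apply m.+3 (hypercycle r m.+3) x v = mu * x v ^+ m.+2.

Let mu_gt1 : 1 < mu.
Proof. by apply: lt_trans mu_gt2; rewrite ltr1n. Qed.

Let one_sub_mu_neq0 : 1 - mu != 0.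
Proof. by rewrite ltr0_neq0 // subr_lt0. Qed.

Let two_sub_mu_neq0 : 2 - mu != 0.
Proof. by rewrite ltr0_neq0 // subr_lt0. Qed.

Local Notation Q j := (\prod_(v in hypercycle_edge m.+3 j) x v).

Lemma eigen_prod_form v :
  (hdeg (hypercycle r m.+3) v)%:R * x v ^+ m.+3
  - \sum_(e in hypercycle r m.+3 | v \in e) \prod_(s in e) x s = mu * x v ^+ m.+3.
Proof. by rewrite -mulr_lap_apply // eigen_x mulrCA -exprS. Qed.

Lemma eigen_head j : (2 - mu) * x (j, ord0) ^+ m.+3 = Q j + Q (ord_pred j).
Proof.
have := eigen_prod_form (j, ord0).
rewrite hdeg_hypercycle_head // big_hypercycle_head // => eq_j.
by rewrite mulrBl -eq_j subKr.
Qed.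

Lemma eigen_interior j (s : 'I_m.+2) : s != ord0 -> (1 - mu) * x (j, s) ^+ m.+3 = Q j.
Proof.
move=> s_neq0; have := eigen_prod_form (j, s).
rewrite hdeg_hypercycle_interior // big_hypercycle_interior // => eq_js.
by rewrite mulrBl -eq_js subKr.
Qed.

Lemma eigen_interior_const j (s : 'I_m.+2) : s != ord0 -> x (j, s) = x (j, ord_max).
Proof.
move=> s_neq0; apply: (exprn_odd_inj odd_k) => /=.
by apply: (mulfI one_sub_mu_neq0); rewrite !eigen_interior.
Qed.

Lemma eigen_edge_prod j :
  Q j = x (j, ord0) * x (j, ord_max) ^+ m.+1 * x (ordS j, ord0).
Proof.
rewrite prod_hypercycle_edge // big_ord_recl mulrC; congr (_ * _ * _).
under eq_bigr => t _ do rewrite eigen_interior_const 1?eq_sym ?neq_lift //.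
by rewrite prodr_const card_ord.
Qed.

Lemma eigen_head_sign j :
  Q j * (Num.sg (x (j, ord0)) + Num.sg (x (ordS j, ord0))) = 0.
Proof.
have [->|Q_neq0] := eqVneq (Q j) 0; first by rewrite mul0r.
set t := x (j, ord_max).
have eq_t : (1 - mu) * t ^+ m.+3 = Q j by apply: eigen_interior; rewrite -val_eqE.
have t_neq0 : t != 0.
  by apply: contra Q_neq0 => /eqP t_eq0; rewrite -eq_t t_eq0 expr0n mulr0.
have heads : (1 - mu) * t ^+ 2 = x (j, ord0) * x (ordS j, ord0).
  apply: (mulIf (expf_neq0 m.+1 t_neq0)).
  by rewrite -mulrA -exprD eq_t eigen_edge_prod; ring.
have t2_gt0 : 0 < t ^+ 2 by rewrite exprn_even_gt0 //= t_neq0 orbT.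
by rewrite sgrD_eq0 ?mulr0 // -heads pmulr_llt0 // subr_lt0.
Qed.

Lemma eigen_heads_eq0 j : x (j, ord0) = 0.
Proof.
have sum_eq0 : (2 - mu) * \sum_j `|x (j, ord0)| ^+ m.+3 = 0.
  rewrite mulr_sumr.
  transitivity (\sum_j Num.sg (x (j, ord0)) * (Q j + Q (ord_pred j))).
    by apply: eq_bigr => i _; rewrite -eigen_head -normrX normrEsg sgr_exprn_odd //; ring.
  under eq_bigr do rewrite mulrDr.
  rewrite big_split /= [X in _ + X](reindex_inj (@ordS_inj r)) /=.
  under [X in _ + X]eq_bigr do rewrite ordSK.
  rewrite -big_split /=; apply: big1 => i _.
  by rewrite -[RHS](eigen_head_sign i); ring.
move/eqP: sum_eq0; rewrite mulf_eq0 (negbTE two_sub_mu_neq0) => /eqP sum_eq0.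
have ge0 i (_ : true) : 0 <= `|x (i, ord0)| ^+ m.+3 by rewrite exprn_ge0.
move/eqP: (psumr_eq0P ge0 sum_eq0 (i := j) isT).
by rewrite expf_eq0 normr_eq0 => /andP[_ /eqP].
Qed.

Lemma eigenvector_hypercycle_eq0 v : x v = 0.
Proof.
case: v => j s; have [->|s_neq0] := eqVneq s ord0; first exact: eigen_heads_eq0.
move/eqP: (eigen_interior j s_neq0).
rewrite eigen_edge_prod eigen_heads_eq0 !mul0r mulf_eq0 expf_eq0 /=.
by rewrite (negbTE one_sub_mu_neq0) => /eqP.
Qed.

End HypercycleEigenvector.

Lemma hypercycle_H_eigenvalue2 (R : realType) (r m : nat) :
  (1 < r)%N -> is_H_eigenvalue m.+3 (hypercycle r m.+3) (2 : R).
Proof.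
move=> r_gt1; rewrite -(@hdeg_hypercycle_head r m r_gt1 (Ordinal (ltnW r_gt1))).
apply: indicator_H_eigenvalue => // _ /imsetP[j _ ->].
by rewrite card_hypercycle_edge.
Qed.

Lemma hypercycle_H_eigenvalue_le2 (R : realType) (r m : nat) (mu : R) :
  (1 < r)%N -> odd m.+3 -> is_H_eigenvalue m.+3 (hypercycle r m.+3) mu -> mu <= 2.
Proof.
move=> r_gt1 odd_k [x [[v x_neq0] eigen_x]]; rewrite leNgt; apply/negP => mu_gt2.
by rewrite (eigenvector_hypercycle_eq0 r_gt1 odd_k mu_gt2 eigen_x) eqxx in x_neq0.
Qed.

Theorem proposition4p1 (R : realType) (k r : nat) :
  (3 <= k)%N -> odd k -> (2 <= r)%N ->
  is_largest_H_eigenvalue (R := R) k (hypercycle r k) 2.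
Proof.
case: k => [|[|[|m]]] // _ odd_k r_gt1; split.
- exact: hypercycle_H_eigenvalue2.
- by move=> mu; apply: hypercycle_H_eigenvalue_le2.
Qed.
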